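(* If $x\in(-1,1)$ is irrational then for each $r\in\{0,1\}$ and each $y\in\overline{\mathbb{R}}$ with $|y|\in[\pi/2,+\infty]$ there exists a sequence $n_j$ such that $n_j\equiv r \pmod 2$ for all $j$ and $\lim_{j\to\infty}D_{n_j}(x)/n_j=y$.
   Context: Nodes: $x_{k,n}:=2k/n-1$, $k=0,\dots,n$; $D_n(x)=\sum_{k=0}^n(-1)^k\frac{1}{x-x_{k,n}}$. $\overline{\mathbb{R}}=\mathbb{R}\cup\{\pm\infty\}$ is the two-point compactification of $\mathbb{R}$. A sequence $n_j$ is a strictly increasing map $\mathbb{N}\to\mathbb{N}$. *)

From Stdlib Require Import Reals QArith.
From Coquelicot Require Import Coquelicot.
Open Scope R_scope.

Definition node (k n : nat) : R := 2 * INR k / INR n - 1.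

(* D_n(x) = sum_{k=0}^n (-1)^k / (x - x_{k,n}) ; sum_f_R0 f n has n+1 terms *)
Definition Dn (n : nat) (x : R) : R :=
  sum_f_R0 (fun k => (-1) ^ k / (x - node k n)) n.

Definition irrational (x : R) : Prop := forall q : Q, x <> Q2R q.

Definition abs_ge_pi2 (y : Rbar) : Prop :=
  match y with
  | Finite r => PI / 2 <= Rabs r
  | p_infty => True
  | m_infty => True
  end.

From Stdlib Require Import Reals QArith Qreals ZArith Lia Lra Ranalysis5 Classical IndefiniteDescription.
From Coquelicot Require Import Coquelicot.
Open Scope R_scope.

(* Write a = (x+1)/2 and n a = m + t with m an integer and t in (0,1).  Splitting
   the alternating sum D_n(x) at the node just below x gives
     D_n(x)/n = (-1)^m/2 * (A_m(t) + A_(n-m-1)(1-t)),   A_K(t) = sum_(i<=K) (-1)^i/(t+i).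
   The tails of the A_K are uniformly at most 1/(K+1), so for large m and n-m-1 the
   bracket is close to G_K(t) = A_K(t) + A_K(1-t) for a fixed large K.  G_K is
   continuous on (0,1), G_K(t) >= 1/t - 1, and G_K(1/2) is a Leibniz sum for pi;
   hence every c >= pi is nearly attained by the bracket on a whole window of t.
   Since a is irrational, the orbit (n a) mod 1 enters any window for arbitrarily
   large n of either parity and with m of either parity, which realises
   (-1)^m c/2 = y for |y| >= pi/2; for y = +-oo one takes t close to 0. *)

Lemma sum_f_R0_opp (f : nat -> R) n : sum_f_R0 (fun i => - f i) n = - sum_f_R0 f n.
Proof. induction n as [|n IH]; simpl; [|rewrite IH]; ring. Qed.

Lemma alternating_sum_bounds n (b : nat -> R) :
  (forall i, 0 <= b i) -> (forall i, b (S i) <= b i) ->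
  0 <= sum_f_R0 (fun i => (-1) ^ i * b i) n <= b O.
Proof.
  revert b; induction n as [|n IH]; intros b Hpos Hdec.
  - simpl. specialize (Hpos O). lra.
  - rewrite decomp_sum by lia; simpl pred.
    rewrite (sum_eq _ (fun i => - ((-1) ^ i * b (S i)))) by (intros i _; simpl; ring).
    rewrite sum_f_R0_opp.
    destruct (IH (fun i => b (S i))) as [H0 H1]; auto.
    specialize (Hdec O). simpl. lra.
Qed.

Lemma pow_m1_sqr n : (-1) ^ n * (-1) ^ n = 1.
Proof. rewrite <- Rpow_mult_distr. replace (-1 * -1) with 1 by ring. apply pow1. Qed.

Lemma pow_m1_sub m i : (i <= m)%nat -> (-1) ^ (m - i) = (-1) ^ m * (-1) ^ i.
Proof.
  intros Him. replace m with (m - i + i)%nat at 2 by lia.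
  rewrite pow_add, Rmult_assoc, pow_m1_sqr. ring.
Qed.

Definition alt_harmonic (K : nat) (t : R) : R :=
  sum_f_R0 (fun i => (-1) ^ i / (t + INR i)) K.

Lemma alt_harmonic_shift_bounds s K t : 0 < t ->
  0 <= sum_f_R0 (fun i => (-1) ^ i / (t + INR (s + i))) K <= / (t + INR s).
Proof.
  intros Ht.
  assert (Hb : forall i, 0 < t + INR (s + i)) by (intros i; pose proof (pos_INR (s + i)); lra).
  replace (/ (t + INR s)) with (/ (t + INR (s + 0))) by now rewrite Nat.add_0_r.
  apply (alternating_sum_bounds K (fun i => / (t + INR (s + i)))).
  - intros i. left. apply Rinv_0_lt_compat, Hb.
  - intros i. apply Rinv_le_contravar; [apply Hb|]. rewrite Nat.add_succ_r, S_INR. lra.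
Qed.

Lemma alt_harmonic_nonneg K t : 0 < t -> 0 <= alt_harmonic K t.
Proof. intros Ht. apply (alt_harmonic_shift_bounds 0 K t Ht). Qed.

Lemma alt_harmonic_lower K t : 0 < t -> / t - 1 <= alt_harmonic K t.
Proof.
  intros Ht. unfold alt_harmonic. destruct K as [|K].
  - simpl. replace (1 / (t + 0)) with (/ t) by (field; lra). lra.
  - rewrite decomp_sum by lia; simpl pred.
    rewrite (sum_eq _ (fun i => - ((-1) ^ i / (t + INR (1 + i)))))
      by (intros i _; simpl; unfold Rdiv; ring).
    rewrite sum_f_R0_opp.
    destruct (alt_harmonic_shift_bounds 1 K t Ht) as [_ Hup].
    change (INR 1) with 1 in Hup.
    assert (H1 : / (t + 1) <= 1) by (rewrite <- Rinv_1; apply Rinv_le_contravar; lra).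
    replace ((-1) ^ 0 / (t + INR 0)) with (/ t) by (simpl; field; lra). lra.
Qed.

Lemma alt_harmonic_tail K K' t : 0 < t -> (K <= K')%nat ->
  Rabs (alt_harmonic K' t - alt_harmonic K t) <= / (INR K + 1).
Proof.
  intros Ht HK.
  assert (HK1 : 0 < INR K + 1) by (pose proof (pos_INR K); lra).
  destruct (Nat.eq_dec K K') as [<-|HKK'].
  { rewrite Rminus_diag, Rabs_R0. left. apply Rinv_0_lt_compat. lra. }
  unfold alt_harmonic. rewrite (tech2 _ K K') by lia. rewrite Rplus_minus_l.
  rewrite (sum_eq _ (fun i => (-1) ^ i / (t + INR (S K + i)) * (-1) ^ S K))
    by (intros i _; rewrite pow_add; unfold Rdiv; ring).
  rewrite <- scal_sum, Rabs_mult, pow_1_abs, Rmult_1_l.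
  destruct (alt_harmonic_shift_bounds (S K) (K' - S K) t Ht) as [H0 H1].
  rewrite Rabs_pos_eq by exact H0.
  apply (Rle_trans _ _ _ H1). apply Rinv_le_contravar; [lra|]. rewrite S_INR. lra.
Qed.

Lemma alt_harmonic_pair_lower m k t : 0 < t < 1 ->
  / t - 1 <= alt_harmonic m t + alt_harmonic k (1 - t).
Proof.
  intros Ht. pose proof (alt_harmonic_lower m t ltac:(lra)).
  pose proof (alt_harmonic_nonneg k (1 - t) ltac:(lra)). lra.
Qed.

(** * Splitting [D_n] at a node *)

Lemma alt_sum_split n m t : (m < n)%nat -> 0 < t < 1 ->
  sum_f_R0 (fun k => (-1) ^ k / (INR m + t - INR k)) n
  = (-1) ^ m * (alt_harmonic m t + alt_harmonic (n - S m) (1 - t)).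
Proof.
  intros Hmn Ht. rewrite (tech2 _ m n Hmn), Rmult_plus_distr_l. unfold alt_harmonic. f_equal.
  - rewrite <- sum_f_R0_skip, scal_sum. apply sum_eq. intros i Hi.
    rewrite minus_INR, pow_m1_sub by exact Hi.
    pose proof (pos_INR i). field. lra.
  - rewrite scal_sum. apply sum_eq. intros i _.
    rewrite pow_add, plus_INR, S_INR. simpl pow.
    pose proof (pos_INR i). field. lra.
Qed.

Lemma Dn_div_alt_harmonic n m t x : (m < n)%nat -> 0 < t < 1 ->
  INR n * ((x + 1) / 2) = INR m + t ->
  Dn n x / INR n
  = / 2 * ((-1) ^ m * (alt_harmonic m t + alt_harmonic (n - S m) (1 - t))).
Proof.
  intros Hmn Ht Hx. rewrite <- alt_sum_split by assumption.
  assert (Hn : 0 < INR n) by (apply lt_0_INR; lia).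
  unfold Rdiv at 1. unfold Dn. rewrite Rmult_comm, !scal_sum.
  apply sum_eq. intros k _.
  assert (Hk : INR m + t - INR k <> 0).
  { destruct (Nat.le_gt_cases k m) as [Hkm|Hkm].
    - apply le_INR in Hkm. lra.
    - apply (le_INR (S m)) in Hkm. rewrite S_INR in Hkm. lra. }
  replace (x - node k n) with (2 * (INR m + t - INR k) / INR n)
    by (unfold node; rewrite <- Hx; field; lra).
  field. lra.
Qed.

(** * Irrational rotations *)

Lemma pigeonhole M (f : nat -> nat) :
  (forall i, (i <= M)%nat -> (f i < M)%nat) -> exists i j, (i < j <= M)%nat /\ f i = f j.
Proof.
  revert f; induction M as [|M IH]; intros f Hf.
  - specialize (Hf O (le_n O)). lia.
  - set (v := f (S M)).
    destruct (classic (exists i, (i <= M)%nat /\ f i = v)) as [[i [Hi Hv]]|Hno].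
    { exists i, (S M). split; [lia|exact Hv]. }
    assert (Hne : forall i, (i <= M)%nat -> f i <> v) by (intros i Hi E; apply Hno; eauto).
    (* squeeze the value [v] out of the range to land in [0, M) *)
    set (g i := if Nat.ltb (f i) v then f i else (f i - 1)%nat).
    assert (Hv : (v < S M)%nat) by (apply Hf; lia).
    destruct (IH g) as [i [j [Hij Hg]]].
    + intros i Hi. specialize (Hne i ltac:(lia)). specialize (Hf i ltac:(lia)).
      unfold g. destruct (Nat.ltb_spec (f i) v); lia.
    + exists i, j. split; [lia|].
      pose proof (Hne i ltac:(lia)). pose proof (Hne j ltac:(lia)).
      unfold g in Hg. destruct (Nat.ltb_spec (f i) v), (Nat.ltb_spec (f j) v); lia.
Qed.

Lemma irrational_mul_neq_IZR a q z : irrational a -> (0 < q)%nat -> INR q * a <> IZR z.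
Proof.
  intros Ha Hq E. destruct q as [|q]; [lia|].
  apply (Ha (z # Pos.of_succ_nat q)).
  unfold Q2R; cbn [Qnum Qden].
  rewrite Zpos_P_of_succ_nat, <- Nat2Z.inj_succ, <- INR_IZR_INZ, <- E.
  field. apply not_0_INR. lia.
Qed.

Lemma irrational_half_succ x : irrational x -> irrational ((x + 1) / 2).
Proof.
  intros Hx q E. apply (Hx (2 * q - 1)%Q).
  rewrite Q2R_minus, Q2R_mult, <- E. unfold Q2R. simpl. field.
Qed.

Lemma dirichlet_approx a d : irrational a -> 0 < d ->
  exists q z, (0 < q)%nat /\ 0 < Rabs (INR q * a - IZR z) < d.
Proof.
  intros Ha Hd. destruct (archimed_cor1 d Hd) as [M [HMd HM]].
  assert (HMpos : 0 < INR M) by (apply lt_0_INR; lia).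
  set (frac i := INR i * a - IZR (Zfloor (INR i * a))).
  assert (Hfrac : forall i, 0 <= frac i < 1)
    by (intros i; unfold frac; pose proof (Zfloor_bound (INR i * a)); lra).
  assert (Hbox0 : forall i, 0 <= INR M * frac i) by (intros i; specialize (Hfrac i); nra).
  set (box i := proj1_sig (nfloor_ex _ (Hbox0 i))).
  assert (Hbox : forall i, INR (box i) <= INR M * frac i < INR (box i) + 1)
    by (intros i; exact (proj2_sig (nfloor_ex _ (Hbox0 i)))).
  destruct (pigeonhole M box) as [i [j [Hij Hb]]].
  { intros i _. apply INR_lt. specialize (Hbox i). specialize (Hfrac i). nra. }
  exists (j - i)%nat, (Zfloor (INR j * a) - Zfloor (INR i * a))%Z. split; [lia|].
  replace (INR (j - i) * a - IZR (Zfloor (INR j * a) - Zfloor (INR i * a)))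
    with (frac j - frac i) by (unfold frac; rewrite minus_INR, minus_IZR by lia; ring).
  split.
  - apply Rabs_pos_lt. intro E.
    apply (irrational_mul_neq_IZR a (j - i) (Zfloor (INR j * a) - Zfloor (INR i * a)) Ha);
      [lia|].
    unfold frac in E. rewrite minus_INR, minus_IZR by lia. lra.
  - pose proof (Hbox i) as Hi. pose proof (Hbox j) as Hj. rewrite Hb in Hi.
    assert (Hlt : INR M * Rabs (frac j - frac i) < 1).
    { rewrite <- (Rabs_pos_eq (INR M)) by lra. rewrite <- Rabs_mult.
      apply Rabs_lt_between. nra. }
    apply Rlt_trans with (/ INR M); [|exact HMd].
    apply (Rmult_lt_reg_l (INR M)); [lra|]. rewrite Rinv_r by lra. exact Hlt.
Qed.

Lemma multiple_in_interval h L : 0 < h -> 0 <= L -> exists k : nat, L < INR k * h <= L + h.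
Proof.
  intros Hh HL. destruct (nfloor_ex (L / h) (Rdiv_le_0_compat L h HL Hh)) as [k Hk].
  exists (S k). rewrite S_INR.
  assert (E : L = L / h * h) by (field; lra).
  split; rewrite E at 1; nra.
Qed.

Lemma irrational_orbit_dense a g lo d N : irrational a -> 0 <= lo -> 0 < d -> lo + d <= 1 ->
  exists q z, (N <= q)%nat /\ lo < INR q * a + g - IZR z < lo + d.
Proof.
  intros Ha Hlo Hd Hlod.
  destruct (dirichlet_approx a d Ha Hd) as [q0 [z0 [Hq0 [Hth0 Hthd]]]].
  set (w := INR N * a + g). set (c := w - IZR (Zfloor w)).
  assert (Hc : 0 <= c < 1) by (unfold c; pose proof (Zfloor_bound w); lra).
  destruct (Rle_lt_dec 0 (INR q0 * a - IZR z0)) as [Hs|Hs].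
  - rewrite Rabs_pos_eq in Hth0, Hthd by exact Hs.
    destruct (multiple_in_interval _ (1 + lo - c) Hth0) as [k Hk]; [lra|].
    exists (N + k * q0)%nat, (Zfloor w + Z.of_nat k * z0 + 1)%Z. split; [lia|].
    replace (INR (N + k * q0) * a + g - IZR (Zfloor w + Z.of_nat k * z0 + 1))
      with (c + INR k * (INR q0 * a - IZR z0) - 1)
      by (unfold c, w; rewrite plus_INR, mult_INR, !plus_IZR, mult_IZR, <- INR_IZR_INZ; ring).
    lra.
  - rewrite Rabs_left in Hth0, Hthd by exact Hs.
    destruct (multiple_in_interval _ (c - lo + 1 - d) Hth0) as [k Hk]; [lra|].
    exists (N + k * q0)%nat, (Zfloor w + Z.of_nat k * z0 - 1)%Z. split; [lia|].
    replace (INR (N + k * q0) * a + g - IZR (Zfloor w + Z.of_nat k * z0 - 1))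
      with (c - INR k * (- (INR q0 * a - IZR z0)) + 1)
      by (unfold c, w; rewrite plus_INR, mult_INR, minus_IZR, !plus_IZR, mult_IZR,
            <- INR_IZR_INZ; ring).
    lra.
Qed.

Lemma double_add_mod2 q r : (r <= 1)%nat -> Nat.modulo (2 * q + r) 2 = r.
Proof. intros Hr. rewrite Nat.add_comm, Nat.mul_comm, Nat.Div0.mod_add. apply Nat.mod_small. lia. Qed.

Lemma orbit_window_parity a r p t0 d N : irrational a -> 0 <= a ->
  (p <= 1)%nat -> 0 < t0 -> 0 < d -> t0 + d < 1 ->
  exists q m, (N <= q)%nat /\ t0 < INR (2 * q + r) * a - INR (2 * m + p) < t0 + d.
Proof.
  intros Ha Ha0 Hp Ht0 Hd Htd.
  assert (Hpr : INR p <= 1) by exact (le_INR p 1 Hp).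
  pose proof (pos_INR p). pose proof (pos_INR r).
  destruct (irrational_orbit_dense a (INR r * a / 2) ((INR p + t0) / 2) (d / 2) N Ha)
    as [q [z [Hq Hz]]]; try lra.
  assert (Hqa : 0 <= INR q * a) by (pose proof (pos_INR q); nra).
  assert (Hra : 0 <= INR r * a) by nra.
  assert (Hz0 : (0 <= z)%Z) by (cut (-1 < z)%Z; [lia|]; apply lt_IZR; lra).
  exists q, (Z.to_nat z). split; [exact Hq|].
  replace (INR (2 * Z.to_nat z + p)) with (2 * IZR z + INR p)
    by (rewrite plus_INR, mult_INR, (INR_IZR_INZ (Z.to_nat z)), Z2Nat.id by exact Hz0;
        simpl; ring).
  rewrite plus_INR, mult_INR. simpl (INR 2). lra.
Qed.

Lemma Dn_ratio_window x r p t0 d K N : -1 < x < 1 -> irrational x -> (r <= 1)%nat ->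
  (p <= 1)%nat -> 0 < t0 -> 0 < d -> t0 + d < 1 ->
  exists n m t, (N < n)%nat /\ Nat.modulo n 2 = r /\ (K <= m)%nat /\ (K <= n - S m)%nat /\
    t0 < t < t0 + d /\
    Dn n x / INR n = / 2 * ((-1) ^ p * (alt_harmonic m t + alt_harmonic (n - S m) (1 - t))).
Proof.
  intros Hx Hirr Hr Hp Ht0 Hd Htd.
  set (a := (x + 1) / 2).
  assert (Ha : 0 < a < 1) by (unfold a; lra).
  destruct (INR_unbounded ((INR K + 1) / a + (INR K + 1) / (1 - a) + INR N)) as [N1 HN1].
  assert (HKa : 0 <= (INR K + 1) / a) by (apply Rdiv_le_0_compat; pose proof (pos_INR K); lra).
  assert (HKa' : 0 <= (INR K + 1) / (1 - a))
    by (apply Rdiv_le_0_compat; pose proof (pos_INR K); lra).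
  destruct (orbit_window_parity a r p t0 d N1 (irrational_half_succ x Hirr)) as [q [m Hqm]];
    try lra; try assumption.
  destruct Hqm as [Hq Ht].
  set (n := (2 * q + r)%nat) in Ht. set (m' := (2 * m + p)%nat) in Ht.
  set (t := INR n * a - INR m') in Ht.
  assert (Hn : INR N1 <= INR n) by (apply le_INR; unfold n; lia).
  pose proof (pos_INR N).
  assert (Hlow : INR K + 1 < INR n * a) by (apply Rlt_div_l; lra).
  assert (Hhigh : INR K + 1 < INR n * (1 - a)) by (apply Rlt_div_l; lra).
  assert (Hmn : (m' < n)%nat) by (apply INR_lt; unfold t in Ht; nra).
  exists n, m', t. split; [|split; [|split; [|split; [|split]]]].
  - apply INR_lt. lra.
  - apply double_add_mod2. exact Hr.
  - cut (INR K < INR m'); [intros HK; apply INR_lt in HK; lia|]. unfold t in Ht. lra.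
  - apply INR_le. rewrite minus_INR, S_INR by exact Hmn. unfold t in Ht. lra.
  - exact Ht.
  - rewrite (Dn_div_alt_harmonic n m' t x Hmn); [|lra|unfold t, a; ring].
    unfold m'. rewrite pow_add, pow_1_even, Rmult_1_l. reflexivity.
Qed.

(** * The symmetric sums [G_K] *)

Definition sym_alt_harmonic (K : nat) (t : R) : R :=
  alt_harmonic K t + alt_harmonic K (1 - t).

Lemma alt_harmonic_continuous K t : 0 < t -> continuity_pt (alt_harmonic K) t.
Proof.
  intros Ht. induction K as [|K IH].
  - unfold alt_harmonic. simpl. reg. lra.
  - change (continuity_pt (fun s => alt_harmonic K s + (-1) ^ S K / (s + INR (S K))) t).
    apply (continuity_pt_plus (alt_harmonic K) (fun s => (-1) ^ S K / (s + INR (S K))));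
      [exact IH|].
    reg. pose proof (pos_INR (S K)). lra.
Qed.

Lemma sym_alt_harmonic_continuous K t : 0 < t < 1 -> continuity_pt (sym_alt_harmonic K) t.
Proof.
  intros Ht.
  apply (continuity_pt_plus (alt_harmonic K) (fun s => alt_harmonic K (1 - s))).
  - apply alt_harmonic_continuous. lra.
  - apply (continuity_pt_comp (fun s => 1 - s) (alt_harmonic K)); [reg|].
    apply alt_harmonic_continuous. lra.
Qed.

Lemma sym_alt_harmonic_half_le N :
  sym_alt_harmonic (2 * N) (/ 2) <= PI + 4 / (4 * INR N + 3).
Proof.
  assert (E : forall K, alt_harmonic K (/ 2) = 2 * sum_f_R0 (tg_alt PI_tg) K).
  { intros K. unfold alt_harmonic. rewrite scal_sum. apply sum_eq. intros i _.
    unfold tg_alt, PI_tg. rewrite plus_INR, mult_INR. simpl INR.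
    pose proof (pos_INR i). field. lra. }
  assert (Hlast : tg_alt PI_tg (S (2 * N)) = - / (4 * INR N + 3)).
  { unfold tg_alt, PI_tg. rewrite pow_1_odd.
    replace (INR (2 * S (2 * N) + 1)) with (4 * INR N + 3)
      by (rewrite plus_INR, mult_INR, (S_INR (2 * N)), mult_INR; simpl; ring).
    ring. }
  destruct (PI_ineq N) as [Hodd _]. rewrite tech5, Hlast in Hodd.
  unfold sym_alt_harmonic. replace (1 - / 2) with (/ 2) by field. rewrite E.
  pose proof (pos_INR N). unfold Rdiv. lra.
Qed.

Lemma sym_alt_harmonic_level_set K c : sym_alt_harmonic K (/ 2) <= c ->
  exists t, 0 < t <= / 2 /\ sym_alt_harmonic K t = c.
Proof.
  intros Hc.
  destruct (Rle_lt_or_eq_dec _ _ Hc) as [Hlt|Heq].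
  2:{ exists (/ 2). split; [lra|exact Heq]. }
  assert (Hc0 : 0 < c).
  { unfold sym_alt_harmonic in Hlt.
    pose proof (alt_harmonic_nonneg K (/ 2) ltac:(lra)).
    pose proof (alt_harmonic_nonneg K (1 - / 2) ltac:(lra)). lra. }
  set (tl := / (c + 2)).
  assert (Htl : 0 < tl < / 2)
    by (unfold tl; split; [apply Rinv_0_lt_compat|apply Rinv_lt_contravar]; lra).
  (* [G_K t >= 1/t - 1], which exceeds [c] at [t = 1/(c+2)] *)
  assert (Hgt : c < sym_alt_harmonic K tl).
  { pose proof (alt_harmonic_pair_lower K K tl ltac:(lra)) as Hlow.
    unfold tl in Hlow at 1. rewrite Rinv_inv in Hlow. unfold sym_alt_harmonic. lra. }
  destruct (IVT_interv (fun s => c - sym_alt_harmonic K s) tl (/ 2)) as [t [Ht Hzero]];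
    try lra.
  - intros s Hs.
    apply (continuity_pt_minus (fun _ => c) (sym_alt_harmonic K)).
    + apply continuity_pt_const. intros ? ?. reflexivity.
    + apply sym_alt_harmonic_continuous. lra.
  - exists t. split; lra.
Qed.

Lemma sym_alt_harmonic_near c eps : PI <= c -> 0 < eps ->
  exists K t, 0 < t < 1 /\ / (INR K + 1) < eps /\ Rabs (sym_alt_harmonic K t - c) < eps.
Proof.
  intros Hc Heps. destruct (archimed_cor1 eps Heps) as [N [HN HN0]].
  assert (HNpos : 0 < INR N) by (apply lt_0_INR; lia).
  set (c' := Rmax c (sym_alt_harmonic (2 * N) (/ 2))).
  destruct (sym_alt_harmonic_level_set (2 * N) c' (Rmax_r _ _)) as [t [Ht Hval]].
  exists (2 * N)%nat, t. split; [lra|]. split.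
  - apply Rle_lt_trans with (/ INR N); [|exact HN].
    apply Rinv_le_contravar; [lra|]. rewrite mult_INR. simpl. lra.
  - assert (Hleib : 4 / (4 * INR N + 3) <= / INR N).
    { apply Rle_trans with (4 * / (4 * INR N)).
      - apply Rmult_le_compat_l; [lra|]. apply Rinv_le_contravar; lra.
      - right. field. lra. }
    pose proof (sym_alt_harmonic_half_le N).
    pose proof (Rinv_0_lt_compat _ HNpos).
    assert (Hc' : c <= c' <= c + / INR N) by (split; [apply Rmax_l|apply Rmax_lub; lra]).
    rewrite Hval, Rabs_pos_eq; lra.
Qed.

Lemma continuity_pt_window f s eps : continuity_pt f s -> 0 < s < 1 -> 0 < eps ->
  exists t0 d, 0 < t0 /\ 0 < d /\ t0 + d < 1 /\
    forall t, t0 < t < t0 + d -> Rabs (f t - f s) < eps.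
Proof.
  intros Hf Hs Heps.
  destruct (proj1 (continuity_pt_locally f s) Hf (mkposreal eps Heps)) as [del Hdel].
  pose proof (cond_pos del).
  set (h := Rmin del (Rmin s (1 - s)) / 2).
  assert (Hh : 0 < h /\ h < del /\ h < s /\ h < 1 - s).
  { assert (0 < Rmin del (Rmin s (1 - s))) by (repeat apply Rmin_pos; lra).
    pose proof (Rmin_l del (Rmin s (1 - s))). pose proof (Rmin_r del (Rmin s (1 - s))).
    pose proof (Rmin_l s (1 - s)). pose proof (Rmin_r s (1 - s)).
    unfold h. lra. }
  exists (s - h), (2 * h). split; [lra|]. split; [lra|]. split; [lra|].
  intros t Ht. apply Hdel. change (Rabs (t - s) < del). apply Rabs_lt_between. lra.
Qed.

Lemma alt_harmonic_pair_window c eps : PI <= c -> 0 < eps ->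
  exists t0 d K, 0 < t0 /\ 0 < d /\ t0 + d < 1 /\
    forall t, t0 < t < t0 + d -> forall K1 K2, (K <= K1)%nat -> (K <= K2)%nat ->
      Rabs (alt_harmonic K1 t + alt_harmonic K2 (1 - t) - c) < eps.
Proof.
  intros Hc Heps.
  destruct (sym_alt_harmonic_near c (eps / 4) Hc) as [K [s [Hs [HK Hnear]]]]; [lra|].
  destruct (continuity_pt_window (sym_alt_harmonic K) s (eps / 4)) as [t0 [d [Ht0 [Hd [Htd Hwin]]]]];
    [apply sym_alt_harmonic_continuous; lra|lra|lra|].
  exists t0, d, K. split; [lra|]. split; [lra|]. split; [lra|].
  intros t Ht K1 K2 HK1 HK2.
  pose proof (alt_harmonic_tail K K1 t ltac:(lra) HK1) as T1.
  pose proof (alt_harmonic_tail K K2 (1 - t) ltac:(lra) HK2) as T2.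
  specialize (Hwin t Ht). unfold sym_alt_harmonic in Hwin, Hnear.
  apply Rabs_le_between in T1, T2. apply Rabs_lt_between in Hwin, Hnear.
  apply Rabs_lt_between. lra.
Qed.

Lemma Dn_ratio_near x r p c eps N : -1 < x < 1 -> irrational x -> (r <= 1)%nat ->
  (p <= 1)%nat -> PI <= c -> 0 < eps ->
  exists n, (N < n)%nat /\ Nat.modulo n 2 = r /\
    Rabs (Dn n x / INR n - / 2 * ((-1) ^ p * c)) < eps.
Proof.
  intros Hx Hirr Hr Hp Hc Heps.
  destruct (alt_harmonic_pair_window c eps Hc Heps) as [t0 [d [K [Ht0 [Hd [Htd Hwin]]]]]].
  destruct (Dn_ratio_window x r p t0 d K N) as [n [m [t [HN [Hmod [HKm [HKn [Ht HDn]]]]]]]];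
    try assumption.
  exists n. split; [exact HN|]. split; [exact Hmod|].
  rewrite HDn, <- Rmult_minus_distr_l, <- Rmult_minus_distr_l, !Rabs_mult, pow_1_abs.
  rewrite Rabs_pos_eq by lra.
  specialize (Hwin t Ht m (n - S m)%nat HKm HKn). lra.
Qed.

Lemma Dn_ratio_large x r p M N : -1 < x < 1 -> irrational x -> (r <= 1)%nat ->
  (p <= 1)%nat ->
  exists n, (N < n)%nat /\ Nat.modulo n 2 = r /\ M < (-1) ^ p * (Dn n x / INR n).
Proof.
  intros Hx Hirr Hr Hp.
  pose proof (Rabs_pos M). pose proof (Rle_abs M).
  set (t0 := / (4 * (Rabs M + 2))).
  assert (Ht0 : 0 < t0 < / 4)
    by (unfold t0; split; [apply Rinv_0_lt_compat|apply Rinv_lt_contravar]; lra).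
  destruct (Dn_ratio_window x r p t0 t0 0 N) as [n [m [t [HN [Hmod [_ [_ [Ht HDn]]]]]]]];
    try assumption; try lra.
  exists n. split; [exact HN|]. split; [exact Hmod|].
  assert (Hsign : forall v, (-1) ^ p * (/ 2 * ((-1) ^ p * v)) = / 2 * v).
  { intros v. transitivity (/ 2 * ((-1) ^ p * (-1) ^ p) * v); [ring|].
    rewrite pow_m1_sqr. ring. }
  rewrite HDn, Hsign.
  pose proof (alt_harmonic_pair_lower m (n - S m) t ltac:(lra)).
  assert (Hinv : 2 * (Rabs M + 2) < / t).
  { replace (2 * (Rabs M + 2)) with (/ (t0 + t0)) by (unfold t0; field; lra).
    apply Rinv_lt_contravar; nra. }
  lra.
Qed.

Lemma Dn_ratio_cluster x r y : -1 < x < 1 -> irrational x -> (r <= 1)%nat -> abs_ge_pi2 y ->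
  forall P, Rbar_locally y P ->
  forall N, exists n, (N < n)%nat /\ Nat.modulo n 2 = r /\ P (Dn n x / INR n).
Proof.
  intros Hx Hirr Hr Hy P HP N. destruct y as [l| |]; simpl in Hy, HP.
  - destruct HP as [eps Heps].
    set (p := if Rle_dec 0 l then 0%nat else 1%nat).
    assert (Hl : / 2 * ((-1) ^ p * (2 * Rabs l)) = l).
    { unfold p. destruct (Rle_dec 0 l).
      - rewrite Rabs_pos_eq by assumption. simpl. lra.
      - rewrite Rabs_left by lra. simpl. lra. }
    destruct (Dn_ratio_near x r p (2 * Rabs l) eps N) as [n [HN [Hmod Hn]]];
      try assumption; try lra.
    + unfold p. destruct (Rle_dec 0 l); lia.
    + apply cond_pos.
    + exists n. split; [exact HN|]. split; [exact Hmod|].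
      apply Heps. rewrite Hl in Hn. exact Hn.
  - destruct HP as [M HM].
    destruct (Dn_ratio_large x r 0 M N) as [n [HN [Hmod Hn]]]; try assumption; [lia|].
    exists n. split; [exact HN|]. split; [exact Hmod|].
    apply HM. simpl in Hn. lra.
  - destruct HP as [M HM].
    destruct (Dn_ratio_large x r 1 (- M) N) as [n [HN [Hmod Hn]]]; try assumption; [lia|].
    exists n. split; [exact HN|]. split; [exact Hmod|].
    apply HM. simpl in Hn. lra.
Qed.

Definition Rbar_basic_nbhd (y : Rbar) (j : nat) (v : R) : Prop :=
  match y with
  | Finite l => Rabs (v - l) < / (INR j + 1)
  | p_infty => INR j < v
  | m_infty => v < - INR j
  end.

Lemma Rbar_locally_basic_nbhd y j : Rbar_locally y (Rbar_basic_nbhd y j).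
Proof.
  destruct y as [l| |]; simpl.
  - assert (Hpos : 0 < / (INR j + 1)) by (apply Rinv_0_lt_compat; pose proof (pos_INR j); lra).
    exists (mkposreal _ Hpos). intros v Hv. exact Hv.
  - exists (INR j). intros v Hv. exact Hv.
  - exists (- INR j). intros v Hv. exact Hv.
Qed.

Lemma is_lim_seq_basic_nbhd (u : nat -> R) y :
  (forall j, Rbar_basic_nbhd y j (u j)) -> is_lim_seq u y.
Proof.
  intros Hu. apply is_lim_seq_spec. destruct y as [l| |]; simpl in Hu |- *.
  - intros eps. destruct (archimed_cor1 eps (cond_pos eps)) as [J [HJ HJ0]].
    exists J. intros j Hj. apply Rlt_trans with (/ (INR j + 1)); [apply Hu|].
    apply Rle_lt_trans with (/ INR J); [|exact HJ].
    apply Rinv_le_contravar; [apply lt_0_INR; lia|]. apply le_INR in Hj. lra.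
  - intros M. destruct (INR_unbounded M) as [J HJ]. exists J. intros j Hj.
    specialize (Hu j). apply le_INR in Hj. lra.
  - intros M. destruct (INR_unbounded (- M)) as [J HJ]. exists J. intros j Hj.
    specialize (Hu j). apply le_INR in Hj. lra.
Qed.

Lemma cluster_subsequence (u : nat -> R) (Q : nat -> Prop) y :
  (forall P, Rbar_locally y P -> forall N, exists n, (N < n)%nat /\ Q n /\ P (u n)) ->
  exists nj : nat -> nat,
    (forall j, (nj j < nj (S j))%nat) /\ (forall j, Q (nj j)) /\
    is_lim_seq (fun j => u (nj j)) y.
Proof.
  intros Hclu.
  assert (Hpick : forall j N, {n | (N < n)%nat /\ Q n /\ Rbar_basic_nbhd y j (u n)})
    by (intros j N; apply constructive_indefinite_description, Hclu, Rbar_locally_basic_nbhd).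
  set (nj := fix nj j :=
         match j with
         | O => proj1_sig (Hpick O O)
         | S j' => proj1_sig (Hpick j (nj j'))
         end).
  assert (Hnj : forall j, Q (nj j) /\ Rbar_basic_nbhd y j (u (nj j)))
    by (intros [|j]; apply (proj2 (proj2_sig (Hpick _ _)))).
  exists nj. split; [|split].
  - intros j. apply (proj1 (proj2_sig (Hpick (S j) (nj j)))).
  - intros j. apply Hnj.
  - apply is_lim_seq_basic_nbhd. intros j. apply Hnj.
Qed.

Theorem lemma7 (x : R) (hx : -1 < x < 1) (hirr : irrational x)
  (r : nat) (hr : (r = 0 \/ r = 1)%nat) (y : Rbar) (hy : abs_ge_pi2 y) :
  exists nj : nat -> nat,
    (forall j, (nj j < nj (S j))%nat) /\
    (forall j, (Nat.modulo (nj j) 2 = r)%nat) /\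
    is_lim_seq (fun j => Dn (nj j) x / INR (nj j)) y.
Proof.
  apply (cluster_subsequence (fun n => Dn n x / INR n) (fun n => Nat.modulo n 2 = r)).
  apply Dn_ratio_cluster; [exact hx|exact hirr|lia|exact hy].
Qed.
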